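(* Let $(X,d^\star)$ be a $\star$-metric space. Then the topological space $(X,\mathscr{T}_{d^\star})$ is metrizable, i.e. there exists a metric on $X$ inducing the topology $\mathscr{T}_{d^\star}$.
   Context: A $t$-definer is a function $\star:[0,\infty)\times[0,\infty)\to[0,\infty)$ such that for all $a,b,c\ge 0$: $a\star b=b\star a$; $a\star(b\star c)=(a\star b)\star c$; if $a\le b$ then $a\star c\le b\star c$; $a\star 0=a$; and $\star$ is continuous in its first variable with respect to the Euclidean topology. Given a nonempty set $X$ and a $t$-definer $\star$, a $\star$-metric on $X$ is a function $d^\star:X\times X\to[0,\infty)$ such that for all $x,y,z\in X$: $d^\star(x,y)=0$ iff $x=y$; $d^\star(x,y)=d^\star(y,x)$; and $d^\star(x,y)\le d^\star(x,z)\star d^\star(z,y)$. The pair $(X,d^\star)$ is a $\star$-metric space. For $a\in X$, $r>0$, put $B_{d^\star}(a,r)=\{x\in X: d^\star(a,x)<r\}$, and let $\mathscr{T}_{d^\star}$ be the family of all $U\subseteq X$ such that for each $a\in U$ there is $r>0$ with $B_{d^\star}(a,r)\subseteq U$ (this is a topology on $X$). *)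

From Stdlib Require Import Reals.
Open Scope R_scope.

(* A t-definer: a binary operation on [0,oo), represented as R -> R -> R
   together with closure of [0,oo); all axioms are required on [0,oo). *)
Definition is_tdefiner (star : R -> R -> R) : Prop :=
  (forall a b, 0 <= a -> 0 <= b -> 0 <= star a b) /\
  (forall a b, 0 <= a -> 0 <= b -> star a b = star b a) /\
  (forall a b c, 0 <= a -> 0 <= b -> 0 <= c ->
     star a (star b c) = star (star a b) c) /\
  (forall a b c, 0 <= a -> 0 <= b -> 0 <= c -> a <= b -> star a c <= star b c) /\
  (forall a, 0 <= a -> star a 0 = a) /\
  (forall b a, 0 <= b -> 0 <= a ->
     forall eps, 0 < eps -> exists delta, 0 < delta /\
       forall x, 0 <= x -> Rabs (x - a) < delta ->
         Rabs (star x b - star a b) < eps).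

Definition is_star_metric {X : Type} (star : R -> R -> R) (d : X -> X -> R) : Prop :=
  (forall x y, 0 <= d x y) /\
  (forall x y, d x y = 0 <-> x = y) /\
  (forall x y, d x y = d y x) /\
  (forall x y z, d x y <= star (d x z) (d z y)).

Definition is_metric {X : Type} (m : X -> X -> R) : Prop :=
  (forall x y, 0 <= m x y) /\
  (forall x y, m x y = 0 <-> x = y) /\
  (forall x y, m x y = m y x) /\
  (forall x y z, m x y <= m x z + m z y).

Definition ball {X : Type} (d : X -> X -> R) (a : X) (r : R) : X -> Prop :=
  fun x => d a x < r.

Definition ball_open {X : Type} (d : X -> X -> R) (U : X -> Prop) : Prop :=
  forall a, U a -> exists r, 0 < r /\ forall x, ball d a r x -> U x.

From Stdlib Require Import Reals Lra.
Open Scope R_scope.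

(* Truncate d at 1 and put rho(x, y) = sup_z |min(d(x,z),1) - min(d(y,z),1)|.
   This is a genuine metric, and taking z = y gives min(d(x,y),1) <= rho(x,y).
   Conversely, continuity of star in its first variable at 0, made uniform for
   s in [0,1] by monotonicity and finitely many grid points, gives
   t star s <= s + eta for all small t; with the star-triangle inequality this
   bounds rho(a,x) by eta as soon as d(a,x) is small.  Hence every d-ball
   contains a rho-ball with the same centre and vice versa. *)

Section SupDistance.

Context {X : Type} (f : X -> X -> R).
Hypothesis f_range : forall x y, 0 <= f x y <= 1.

Definition gap_set (x y : X) : R -> Prop :=
  fun r => exists z, r = Rabs (f x z - f y z).

Lemma gap_set_bound (x y : X) : bound (gap_set x y).
Proof.
  exists 1; intros r [z ->].
  pose proof (f_range x z); pose proof (f_range y z).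
  apply Rabs_le; lra.
Qed.

Lemma gap_set_inhabited (x y : X) : exists r, gap_set x y r.
Proof. exists (Rabs (f x x - f y x)); exists x; reflexivity. Qed.

Definition sup_dist (x y : X) : R :=
  proj1_sig (completeness _ (gap_set_bound x y) (gap_set_inhabited x y)).

Lemma sup_dist_lub (x y : X) : is_lub (gap_set x y) (sup_dist x y).
Proof. unfold sup_dist; destruct completeness; assumption. Qed.

Lemma sup_dist_ge_gap (x y z : X) : Rabs (f x z - f y z) <= sup_dist x y.
Proof. apply (proj1 (sup_dist_lub x y)); exists z; reflexivity. Qed.

Lemma sup_dist_le (x y : X) (b : R) :
  (forall z, Rabs (f x z - f y z) <= b) -> sup_dist x y <= b.
Proof. intros Hb; apply (proj2 (sup_dist_lub x y)); intros r [z ->]; apply Hb. Qed.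

Lemma sup_dist_ge0 (x y : X) : 0 <= sup_dist x y.
Proof. eapply Rle_trans; [apply Rabs_pos | apply (sup_dist_ge_gap x y x)]. Qed.

Lemma sup_dist_refl (x : X) : sup_dist x x = 0.
Proof.
  apply Rle_antisym; [| apply sup_dist_ge0].
  apply sup_dist_le; intros z; rewrite Rminus_diag, Rabs_R0; lra.
Qed.

Lemma sup_dist_sym (x y : X) : sup_dist x y = sup_dist y x.
Proof.
  apply Rle_antisym; apply sup_dist_le; intros z;
    rewrite Rabs_minus_sym; apply sup_dist_ge_gap.
Qed.

Lemma sup_dist_triangle (x y z : X) : sup_dist x y <= sup_dist x z + sup_dist z y.
Proof.
  apply sup_dist_le; intros w.
  replace (f x w - f y w) with ((f x w - f z w) + (f z w - f y w)) by ring.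
  eapply Rle_trans; [apply Rabs_triang |].
  apply Rplus_le_compat; apply sup_dist_ge_gap.
Qed.

Hypothesis f_diag : forall x, f x x = 0.

Lemma sup_dist_ge (x y : X) : f x y <= sup_dist x y.
Proof.
  eapply Rle_trans; [| apply (sup_dist_ge_gap x y y)].
  rewrite f_diag, Rminus_0_r; apply Rle_abs.
Qed.

Lemma sup_dist_metric : (forall x y, f x y = 0 -> x = y) -> is_metric sup_dist.
Proof.
  intros f_sep; split; [exact sup_dist_ge0 | split; [| split]].
  - intros x y; split; [| intros ->; apply sup_dist_refl].
    intros Hxy; apply f_sep, Rle_antisym; [| apply f_range].
    rewrite <- Hxy; apply sup_dist_ge.
  - exact sup_dist_sym.
  - exact sup_dist_triangle.
Qed.

End SupDistance.

Lemma tdefiner_grid_bound (star : R -> R -> R) : is_tdefiner star ->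
  forall eta, 0 < eta -> forall n : nat, exists delta, 0 < delta /\
    forall t s, 0 <= t -> t < delta -> 0 <= s -> s <= INR n * eta ->
      star t s <= s + 2 * eta.
Proof.
  intros (_ & star_comm & _ & star_mono & star_0 & star_cont) eta Heta n.
  induction n as [| n [delta1 [Hdelta1 IH]]].
  - exists eta; split; [exact Heta |]; intros t s Ht Hteta Hs Hsn; simpl in Hsn.
    replace s with 0 by lra; rewrite star_0; lra.
  - rewrite S_INR.
    assert (Hgrid : 0 <= (INR n + 1) * eta)
      by (apply Rmult_le_pos; [pose proof (pos_INR n) |]; lra).
    destruct (star_cont _ 0 Hgrid (Rle_refl 0) eta Heta) as [delta2 [Hdelta2 Hcont]].
    exists (Rmin delta1 delta2); split; [apply Rmin_pos; assumption |].
    intros t s Ht Htdelta Hs Hsn.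
    destruct (Rle_dec s (INR n * eta)) as [Hle | Hgt].
    + apply IH; try assumption.
      eapply Rlt_le_trans; [exact Htdelta | apply Rmin_l].
    + (* star t s <= star t ((n+1) eta) < star 0 ((n+1) eta) + eta = (n+1) eta + eta *)
      assert (Hmono : star t s <= star t ((INR n + 1) * eta)).
      { rewrite (star_comm t s), (star_comm t) by lra; apply star_mono; lra. }
      assert (Ht2 : Rabs (t - 0) < delta2).
      { rewrite Rminus_0_r, Rabs_right by lra.
        eapply Rlt_le_trans; [exact Htdelta | apply Rmin_r]. }
      specialize (Hcont t Ht Ht2).
      rewrite (star_comm 0), star_0 in Hcont by lra.
      apply Rabs_def2 in Hcont; lra.
Qed.

Lemma tdefiner_uniform_bound (star : R -> R -> R) : is_tdefiner star ->
  forall eta, 0 < eta -> exists delta, 0 < delta /\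
    forall t s, 0 <= t -> t < delta -> 0 <= s <= 1 -> star t s <= s + eta.
Proof.
  intros Hstar eta Heta.
  destruct (INR_archimed (eta / 2) 1 ltac:(lra)) as [n Hn].
  destruct (tdefiner_grid_bound star Hstar (eta / 2) ltac:(lra) n)
    as [delta [Hdelta Hgrid]].
  exists delta; split; [exact Hdelta |].
  intros t s Ht Htdelta Hs; specialize (Hgrid t s); lra.
Qed.

Lemma Rmin1_le_of_le_star (star : R -> R -> R) (t u v eta : R) :
  0 <= eta -> (forall s, 0 <= s <= 1 -> star t s <= s + eta) ->
  0 <= v -> u <= star t v -> Rmin u 1 <= Rmin v 1 + eta.
Proof.
  intros Heta Hstar Hv Hu.
  assert (Huv : v <= 1 -> u <= v + eta)
    by (intros Hv1; eapply Rle_trans; [exact Hu | apply Hstar; lra]).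
  unfold Rmin; destruct (Rle_dec u 1), (Rle_dec v 1); lra.
Qed.

Definition trunc_dist {X : Type} (d : X -> X -> R) (x y : X) : R := Rmin (d x y) 1.

Section StarMetric.

Context {X : Type} {star : R -> R -> R} {d : X -> X -> R}.
Hypothesis star_tdefiner : is_tdefiner star.
Hypothesis d_star_metric : is_star_metric star d.

Lemma trunc_dist_range (x y : X) : 0 <= trunc_dist d x y <= 1.
Proof.
  destruct d_star_metric as [d_ge0 _]; specialize (d_ge0 x y).
  unfold trunc_dist, Rmin; destruct Rle_dec; lra.
Qed.

Lemma trunc_dist_refl (x : X) : trunc_dist d x x = 0.
Proof.
  destruct d_star_metric as (_ & d_eq0 & _).
  unfold trunc_dist; rewrite (proj2 (d_eq0 x x) eq_refl); apply Rmin_left; lra.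
Qed.

Lemma trunc_dist_eq0 (x y : X) : trunc_dist d x y = 0 -> x = y.
Proof.
  destruct d_star_metric as (_ & d_eq0 & _).
  unfold trunc_dist, Rmin; destruct Rle_dec; intros H; [apply d_eq0 |]; lra.
Qed.

Lemma trunc_dist_le_sup_dist (x y : X) :
  trunc_dist d x y <= sup_dist (trunc_dist d) trunc_dist_range x y.
Proof. apply sup_dist_ge, trunc_dist_refl. Qed.

Lemma sup_dist_small_of_dist_small :
  forall eta, 0 < eta -> exists delta, 0 < delta /\
    forall a x, d a x < delta -> sup_dist (trunc_dist d) trunc_dist_range a x <= eta.
Proof.
  destruct d_star_metric as (d_ge0 & _ & d_sym & d_triangle).
  intros eta Heta.
  destruct (tdefiner_uniform_bound star star_tdefiner eta Heta)
    as [delta [Hdelta Hunif]].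
  exists delta; split; [exact Hdelta |].
  intros a x Hax; apply sup_dist_le; intros z; apply Rabs_le.
  assert (Hsmall : forall s, 0 <= s <= 1 -> star (d a x) s <= s + eta)
    by (intros; apply Hunif; auto).
  unfold trunc_dist; split.
  - assert (Rmin (d x z) 1 <= Rmin (d a z) 1 + eta); [| lra].
    apply (Rmin1_le_of_le_star star (d a x)); try lra; auto.
    rewrite (d_sym a x); apply d_triangle.
  - assert (Rmin (d a z) 1 <= Rmin (d x z) 1 + eta); [| lra].
    apply (Rmin1_le_of_le_star star (d a x)); try lra; auto.
Qed.

End StarMetric.

Lemma ball_open_transfer {X : Type} (d d' : X -> X -> R) (U : X -> Prop) :
  (forall a r, 0 < r -> exists s, 0 < s /\ forall x, d' a x < s -> d a x < r) ->
  ball_open d U -> ball_open d' U.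
Proof.
  intros Hballs HU a Ha.
  destruct (HU a Ha) as [r [Hr Hsub]].
  destruct (Hballs a r Hr) as [s [Hs Hss]].
  exists s; split; [exact Hs |]; intros x Hx; apply Hsub, Hss, Hx.
Qed.

Theorem theorem2p4 (X : Type) (star : R -> R -> R) (d : X -> X -> R) :
  inhabited X -> is_tdefiner star -> is_star_metric star d ->
  exists m : X -> X -> R, is_metric m /\
    (forall U : X -> Prop, ball_open d U <-> ball_open m U).
Proof.
  intros _ Hstar Hd.
  exists (sup_dist (trunc_dist d) (trunc_dist_range Hd)); split.
  { apply sup_dist_metric; [apply (trunc_dist_refl Hd) | apply (trunc_dist_eq0 Hd)]. }
  intros U; split; apply ball_open_transfer; intros a r Hr.
  - exists (Rmin r 1); split; [apply Rmin_pos; lra |]; intros x Hx.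
    pose proof (trunc_dist_le_sup_dist Hd a x) as Hle.
    unfold trunc_dist, Rmin in *.
    destruct (Rle_dec r 1), (Rle_dec (d a x) 1); lra.
  - destruct (sup_dist_small_of_dist_small Hstar Hd (r / 2) ltac:(lra))
      as [delta [Hdelta Hsmall]].
    exists delta; split; [exact Hdelta |]; intros x Hx.
    specialize (Hsmall a x Hx); lra.
Qed.
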